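(* Let $\{x_i\}_{i\in[N]}$ be the global solution of the delayed consensus system described in the context, let $\beta>0$ and \[ F(t):=d_x(t)+\beta\int_{\max\{0,t-2\tau\}}^t e^{-(t-s)}\int_s^t\max_{i\in[N]}|\dot x_i(r)|\,\mathrm dr\,\mathrm ds,\qquad t\ge0. \] Then for all $i,j\in[N]$ and $t\ge2\tau$, \[ |x_j(t-\tau)-x_i(t-\sigma)|\le d_x(t-\tau)+\int_{t-\tau}^{t-\sigma}d_x(s-\tau)\,\mathrm ds+\beta^{-1}e^{2\tau}F(t-\sigma). \]
   Context: Let $N\ge2$, $d\ge1$ be integers, $[N]=\{1,\dots,N\}$, $0\le\sigma\le\tau$. Let $\psi:[0,\infty)\to[0,\infty)$ be continuous, nonincreasing, positive everywhere, with $\sup\psi\le1$. Given $x_i^0\in C([-\tau,0],\mathbb{R}^d)$, $\{x_i\}$ is the global solution (continuous on $[-\tau,\infty)$, continuously differentiable on $[0,\infty)$) of $\dot x_i(t)=\sum_{j\ne i}a_{ij}(t)(x_j(t-\tau)-x_i(t-\sigma))$ for $t>0$, with $a_{ij}(t)=\frac1{N-1}\psi(|x_i(t-\sigma)-x_j(t-\tau)|)$, and $x_i=x_i^0$ on $[-\tau,0]$. $d_x(t):=\max_{i,j\in[N]}|x_i(t)-x_j(t)|$. *)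

From Stdlib Require Import Reals Lra List.
From Coquelicot Require Import Coquelicot.
Open Scope R_scope.

(* Vectors of R^d are represented as functions nat -> R; only coordinates k < d matter. *)
Definition vec := nat -> R.

Definition lsum (l : list nat) (f : nat -> R) : R :=
  fold_right (fun j acc => f j + acc) 0 l.

(* Maximum over a list of indices (baseline 0; only applied to nonnegative quantities
   over the nonempty index set [N]). *)
Definition lmax (l : list nat) (f : nat -> R) : R :=
  fold_right (fun j acc => Rmax (f j) acc) 0 l.

Definition vnorm (d : nat) (v : vec) : R :=
  sqrt (lsum (seq 0 d) (fun k => (v k) ^ 2)).

Definition vdist (d : nat) (u v : vec) : R := vnorm d (fun k => u k - v k).

(* Index set [N] is represented by {0, ..., N-1}. *)
Definition idx (N : nat) : list nat := seq 0 N.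

Definition diam (N d : nat) (x : nat -> R -> vec) (t : R) : R :=
  lmax (idx N) (fun i => lmax (idx N) (fun j => vdist d (x i t) (x j t))).

Definition xdot (x : nat -> R -> vec) (i : nat) (r : R) : vec :=
  fun k => Derive (fun u => x i u k) r.

Definition maxvel (N d : nat) (x : nat -> R -> vec) (r : R) : R :=
  lmax (idx N) (fun i => vnorm d (xdot x i r)).

Definition Ffun (N d : nat) (x : nat -> R -> vec) (beta tau : R) (t : R) : R :=
  diam N d x t +
  beta * RInt (fun s => exp (- (t - s)) * RInt (fun r => maxvel N d x r) s t)
              (Rmax 0 (t - 2 * tau)) t.

Definition rhs (N d : nat) (psi : R -> R) (sigma tau : R) (x : nat -> R -> vec)
  (i : nat) (t : R) (k : nat) : R :=
  lsum (filter (fun j => negb (Nat.eqb j i)) (idx N))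
    (fun j => / INR (N - 1) * psi (vdist d (x i (t - sigma)) (x j (t - tau)))
              * (x j (t - tau) k - x i (t - sigma) k)).

Definition is_solution (N d : nat) (psi : R -> R) (sigma tau : R)
  (x : nat -> R -> vec) : Prop :=
  (forall i k t, (i < N)%nat -> (k < d)%nat -> -tau <= t ->
     filterlim (fun s => x i s k) (within (fun s => -tau <= s) (locally t))
               (locally (x i t k))) /\
  (forall i k t, (i < N)%nat -> (k < d)%nat -> 0 < t ->
     is_derive (fun s => x i s k) t (rhs N d psi sigma tau x i t k)).

From Stdlib Require Import Reals Lra Lia List.
From Coquelicot Require Import Coquelicot.
Open Scope R_scope.

(* Put a = t - tau and T = t - sigma. By the triangle inequality
   |x_j(a) - x_i(T)| <= d_x(a) + |x_i(T) - x_i(a)| <= d_x(a) + int_a^T |x_i'(r)| dr.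
   Since 0 < psi <= 1, |x_i'(r)| is at most the average over j <> i of
   |x_j(r-tau) - x_i(r-sigma)| <= d_x(r-tau) + |x_i(r-tau) - x_i(r-sigma)|, and the last
   term is at most H(r-tau), where H(s) = int_s^T max_k |x_k'|. On
   [a-tau, T-tau], a subinterval of [max(0, T-2tau), T], the weight e^{-(T-s)} is at least
   e^{-2tau}, so int_a^T H(r-tau) dr <= e^{2tau} int_{max(0,T-2tau)}^T e^{-(T-s)} H(s) ds,
   which is e^{2tau} (F(T) - d_x(T)) / beta. *)

Lemma lsum_cons a l f : lsum (a :: l) f = f a + lsum l f.
Proof. reflexivity. Qed.

Lemma lsum_ext l f g : (forall j, In j l -> f j = g j) -> lsum l f = lsum l g.
Proof. induction l; simpl; intros H; auto. rewrite H, IHl; auto. Qed.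

Lemma lsum_plus l f g : lsum l (fun j => f j + g j) = lsum l f + lsum l g.
Proof. induction l; simpl; lra. Qed.

Lemma lsum_minus l f g : lsum l (fun j => f j - g j) = lsum l f - lsum l g.
Proof. induction l; simpl; lra. Qed.

Lemma lsum_scal l c f : lsum l (fun j => c * f j) = c * lsum l f.
Proof. induction l; simpl; nra. Qed.

Lemma lsum_const l c : lsum l (fun _ => c) = INR (length l) * c.
Proof. induction l; simpl length; rewrite ?lsum_cons, ?S_INR, ?IHl; simpl; lra. Qed.

Lemma lsum_le l f g : (forall j, In j l -> f j <= g j) -> lsum l f <= lsum l g.
Proof.
  induction l; simpl; intros H; [lra|].
  apply Rplus_le_compat; auto.
Qed.

Lemma lsum_nonneg l f : (forall j, In j l -> 0 <= f j) -> 0 <= lsum l f.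
Proof.
  intros H. rewrite <- (Rmult_0_r (INR (length l))), <- lsum_const.
  now apply lsum_le.
Qed.

Lemma lmax_ge l f j : In j l -> f j <= lmax l f.
Proof.
  induction l; simpl; [tauto|]. intros [<-|H]; [apply Rmax_l|].
  eapply Rle_trans; [apply IHl, H | apply Rmax_r].
Qed.

Lemma lmax_nonneg l f : 0 <= lmax l f.
Proof. induction l; simpl; [lra|]. eapply Rle_trans; [apply IHl | apply Rmax_r]. Qed.

Lemma lmax_ext l f g : (forall j, In j l -> f j = g j) -> lmax l f = lmax l g.
Proof. induction l; simpl; intros H; auto. rewrite H, IHl; auto. Qed.

Lemma In_idx N i : In i (idx N) <-> (i < N)%nat.
Proof. unfold idx. rewrite in_seq. lia. Qed.

Lemma length_filter_neq_le N i : (i < N)%nat ->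
  (length (filter (fun j => negb (Nat.eqb j i)) (idx N)) <= N - 1)%nat.
Proof.
  intros Hi. pose proof (filter_length (fun j => Nat.eqb j i) (idx N)) as Hlen.
  unfold idx in *. rewrite length_seq in Hlen.
  assert (Hin : In i (filter (fun j => Nat.eqb j i) (seq 0 N))).
  { apply filter_In. rewrite in_seq, Nat.eqb_refl. split; [lia | reflexivity]. }
  destruct (filter _ (seq 0 N)); [destruct Hin | simpl in Hlen; lia].
Qed.

Lemma lsum_mul_sq_le l u v :
  (lsum l (fun k => u k * v k)) ^ 2 <=
  lsum l (fun k => (u k) ^ 2) * lsum l (fun k => (v k) ^ 2).
Proof.
  induction l as [|a l IH]; [simpl; lra|]. rewrite !lsum_cons.
  set (A := lsum l (fun k => u k * v k)) in *.
  set (P := lsum l (fun k => (u k) ^ 2)) in *.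
  set (Q := lsum l (fun k => (v k) ^ 2)) in *.
  assert (HP : 0 <= P) by (apply lsum_nonneg; intros; apply pow2_ge_0).
  assert (HQ : 0 <= Q) by (apply lsum_nonneg; intros; apply pow2_ge_0).
  set (x := u a). set (y := v a).
  (* (P y^2 + Q x^2)^2 - (2 A x y)^2 = (P y^2 - Q x^2)^2 + 4 x^2 y^2 (P Q - A^2) *)
  assert (Hcross : 2 * A * x * y <= P * y ^ 2 + Q * x ^ 2).
  { apply Rsqr_incr_0_var; [unfold Rsqr | nra].
    assert (A ^ 2 * (x ^ 2 * y ^ 2) <= P * Q * (x ^ 2 * y ^ 2))
      by (apply Rmult_le_compat_r; nra).
    pose proof (pow2_ge_0 (P * y ^ 2 - Q * x ^ 2)). nra. }
  nra.
Qed.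

Lemma vnorm_nonneg d u : 0 <= vnorm d u.
Proof. apply sqrt_pos. Qed.

Lemma vnorm_sq d u : (vnorm d u) ^ 2 = lsum (seq 0 d) (fun k => (u k) ^ 2).
Proof.
  unfold vnorm. rewrite <- Rsqr_pow2. apply Rsqr_sqrt.
  apply lsum_nonneg. intros. apply pow2_ge_0.
Qed.

Lemma vnorm_le_sq d u c : 0 <= c -> (vnorm d u) ^ 2 <= c ^ 2 -> vnorm d u <= c.
Proof. intros Hc H. pose proof (vnorm_nonneg d u). nra. Qed.

Lemma lsum_mul_le_vnorm d u v :
  lsum (seq 0 d) (fun k => u k * v k) <= vnorm d u * vnorm d v.
Proof.
  pose proof (lsum_mul_sq_le (seq 0 d) u v) as H. rewrite <- !vnorm_sq in H.
  pose proof (vnorm_nonneg d u). pose proof (vnorm_nonneg d v).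
  apply Rsqr_incr_0_var; unfold Rsqr; nra.
Qed.

Lemma vnorm_ext d u v : (forall k, (k < d)%nat -> u k = v k) -> vnorm d u = vnorm d v.
Proof.
  intros H. unfold vnorm. f_equal. apply lsum_ext. intros k Hk.
  apply in_seq in Hk. rewrite H; [reflexivity | lia].
Qed.

Lemma vnorm_triangle d u v : vnorm d (fun k => u k + v k) <= vnorm d u + vnorm d v.
Proof.
  apply vnorm_le_sq; [pose proof (vnorm_nonneg d u); pose proof (vnorm_nonneg d v); lra|].
  assert (Hexp : (vnorm d (fun k => u k + v k)) ^ 2 =
    (vnorm d u) ^ 2 + 2 * lsum (seq 0 d) (fun k => u k * v k) + (vnorm d v) ^ 2).
  { rewrite !vnorm_sq, <- lsum_scal, <- !lsum_plus. apply lsum_ext. intros. ring. }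
  rewrite Hexp. pose proof (lsum_mul_le_vnorm d u v). nra.
Qed.

Lemma vnorm_scal d c u : vnorm d (fun k => c * u k) = Rabs c * vnorm d u.
Proof.
  unfold vnorm. rewrite <- sqrt_Rsqr_abs, <- sqrt_mult_alt by apply Rle_0_sqr.
  f_equal. rewrite <- lsum_scal. apply lsum_ext. intros. unfold Rsqr. ring.
Qed.

Lemma vnorm_zero d : vnorm d (fun _ => 0) = 0.
Proof.
  unfold vnorm. rewrite lsum_const. replace (INR _ * 0 ^ 2) with 0 by ring.
  apply sqrt_0.
Qed.

Lemma vnorm_lsum_le d l (f : nat -> vec) :
  vnorm d (fun k => lsum l (fun j => f j k)) <= lsum l (fun j => vnorm d (f j)).
Proof.
  induction l as [|a l IH]; [simpl; rewrite vnorm_zero; lra|].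
  rewrite lsum_cons.
  eapply Rle_trans; [apply (vnorm_triangle d (f a) (fun k => lsum l (fun j => f j k)))|].
  lra.
Qed.

Lemma vdist_sym d u v : vdist d u v = vdist d v u.
Proof. unfold vdist, vnorm. f_equal. apply lsum_ext. intros. ring. Qed.

Lemma vdist_triangle d u v w : vdist d u w <= vdist d u v + vdist d v w.
Proof.
  unfold vdist. rewrite (vnorm_ext d (fun k => u k - w k) (fun k => (u k - v k) + (v k - w k)))
    by (intros; ring).
  apply vnorm_triangle.
Qed.

Lemma vdist_refl d u : vdist d u u = 0.
Proof. unfold vdist. rewrite <- (vnorm_zero d). apply vnorm_ext. intros. ring. Qed.

Lemma vdist_le_diam N d x t i j : (i < N)%nat -> (j < N)%nat ->
  vdist d (x i t) (x j t) <= diam N d x t.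
Proof.
  intros Hi Hj. unfold diam.
  eapply Rle_trans; [| apply (lmax_ge _ _ i), In_idx, Hi].
  apply (lmax_ge _ (fun j => vdist d (x i t) (x j t))), In_idx, Hj.
Qed.

Lemma continuous_Rplus (f g : R -> R) t : continuous f t -> continuous g t ->
  continuous (fun s => f s + g s) t.
Proof. apply (continuous_plus f g). Qed.

Lemma continuous_Rminus (f g : R -> R) t : continuous f t -> continuous g t ->
  continuous (fun s => f s - g s) t.
Proof. apply (continuous_minus f g). Qed.

Lemma continuous_Rmult (f g : R -> R) t : continuous f t -> continuous g t ->
  continuous (fun s => f s * g s) t.
Proof. apply (continuous_mult f g). Qed.

Lemma continuous_Rmax (f g : R -> R) t : continuous f t -> continuous g t ->
  continuous (fun s => Rmax (f s) (g s)) t.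
Proof.
  intros Hf Hg.
  apply continuous_ext with (fun s => (f s + g s + Rabs (f s - g s)) * / 2).
  { intros s. unfold Rmax. destruct (Rle_dec (f s) (g s));
      [rewrite Rabs_left1 | rewrite Rabs_right]; lra. }
  apply continuous_Rmult; [|apply continuous_const].
  apply continuous_Rplus; [apply continuous_Rplus; assumption|].
  apply continuous_Rabs_comp, continuous_Rminus; assumption.
Qed.

Lemma continuous_lsum l (f : nat -> R -> R) t :
  (forall j, In j l -> continuous (f j) t) -> continuous (fun s => lsum l (fun j => f j s)) t.
Proof.
  induction l; intros H; [apply continuous_const|].
  apply continuous_Rplus;
    [apply H; left | apply IHl; intros; apply H; right]; auto.
Qed.

Lemma continuous_lmax l (f : nat -> R -> R) t :
  (forall j, In j l -> continuous (f j) t) -> continuous (fun s => lmax l (fun j => f j s)) t.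
Proof.
  induction l; intros H; [apply continuous_const|].
  apply continuous_Rmax;
    [apply H; left | apply IHl; intros; apply H; right]; auto.
Qed.

Lemma continuous_vnorm d (u : R -> vec) t :
  (forall k, (k < d)%nat -> continuous (fun s => u s k) t) ->
  continuous (fun s => vnorm d (u s)) t.
Proof.
  intros H. apply continuous_sqrt_comp, (continuous_lsum _ (fun k s => (u s k) ^ 2)).
  intros k Hk. apply in_seq in Hk.
  apply continuous_ext with (fun s => u s k * u s k); [intros s; simpl; ring|].
  apply continuous_Rmult; apply H; lia.
Qed.

Lemma continuous_comp_within (D : R -> Prop) (f g : R -> R) t :
  (forall s, D (f s)) -> continuous f t ->
  filterlim g (within D (locally (f t))) (locally (g (f t))) ->
  continuous (fun s => g (f s)) t.
Proof.
  intros HD Hf Hg. eapply filterlim_comp; [|exact Hg].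
  intros P HP. apply Hf in HP. unfold filtermap in *. eapply filter_imp; [|exact HP].
  intros s Hs. apply Hs, HD.
Qed.

Lemma ex_RInt_continuous_R (f : R -> R) a b : (forall z, continuous f z) -> ex_RInt f a b.
Proof. intros H. apply (ex_RInt_continuous (V := R_CompleteNormedModule)). intros; apply H. Qed.

Lemma RInt_scal_R (g : R -> R) a b c : ex_RInt g a b ->
  RInt (fun r => c * g r) a b = c * RInt g a b.
Proof. exact (RInt_scal g a b c). Qed.

Lemma RInt_plus_R (f g : R -> R) a b : ex_RInt f a b -> ex_RInt g a b ->
  RInt (fun r => f r + g r) a b = RInt f a b + RInt g a b.
Proof. exact (RInt_plus f g a b). Qed.

Lemma RInt_Chasles_R (f : R -> R) a b c : ex_RInt f a b -> ex_RInt f b c ->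
  RInt f a b + RInt f b c = RInt f a c.
Proof. exact (RInt_Chasles f a b c). Qed.

Lemma is_derive_lsum l (f : nat -> R -> R) (df : nat -> R) r :
  (forall j, In j l -> is_derive (f j) r (df j)) ->
  is_derive (fun s => lsum l (fun j => f j s)) r (lsum l df).
Proof.
  induction l; intros H; [apply (is_derive_const 0 r)|].
  apply (is_derive_plus (f a) (fun s => lsum l (fun j => f j s)));
    [apply H; left | apply IHl; intros; apply H; right]; auto.
Qed.

Lemma vdist_le_RInt_vnorm_derive d (y dy : R -> vec) p q : p <= q ->
  (forall r k, p <= r <= q -> (k < d)%nat -> is_derive (fun s => y s k) r (dy r k)) ->
  (forall r k, p <= r <= q -> (k < d)%nat -> continuous (fun s => dy s k) r) ->
  vdist d (y q) (y p) <= RInt (fun r => vnorm d (dy r)) p q.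
Proof.
  intros Hpq Hder Hcont.
  set (v := fun k => y q k - y p k).
  (* |v|^2 = int_p^q <v, y'> <= |v| int_p^q |y'| for the displacement v. *)
  set (phi := fun r => lsum (seq 0 d) (fun k => v k * y r k)).
  set (dphi := fun r => lsum (seq 0 d) (fun k => v k * dy r k)).
  assert (Hftc : is_RInt dphi p q (phi q - phi p)).
  { apply (is_RInt_derive (V := R_CompleteNormedModule) phi dphi);
      rewrite Rmin_left, Rmax_right by exact Hpq; intros r Hr.
    - apply (is_derive_lsum _ (fun k s => v k * y s k)). intros k Hk. apply in_seq in Hk.
      apply is_derive_scal, Hder; [exact Hr | lia].
    - apply (continuous_lsum _ (fun k s => v k * dy s k)). intros k Hk. apply in_seq in Hk.
      apply continuous_Rmult; [apply continuous_const | apply Hcont; [exact Hr | lia]]. }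
  assert (Hint : ex_RInt (fun r => vnorm d (dy r)) p q).
  { apply (ex_RInt_continuous (V := R_CompleteNormedModule)).
    rewrite Rmin_left, Rmax_right by exact Hpq. intros r Hr.
    apply continuous_vnorm. intros k Hk. apply Hcont; assumption. }
  assert (Hsq : RInt dphi p q = (vnorm d v) ^ 2).
  { rewrite (is_RInt_unique _ _ _ _ Hftc), vnorm_sq. unfold phi.
    rewrite <- lsum_minus. apply lsum_ext. intros. unfold v. ring. }
  assert (Hcs : RInt dphi p q <= vnorm d v * RInt (fun r => vnorm d (dy r)) p q).
  { rewrite <- RInt_scal_R by exact Hint.
    apply RInt_le; [exact Hpq | now exists (phi q - phi p) | |].
    - exact (ex_RInt_scal _ _ _ (vnorm d v) Hint).
    - intros. apply lsum_mul_le_vnorm. }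
  assert (0 <= RInt (fun r => vnorm d (dy r)) p q)
    by (apply RInt_ge_0; [exact Hpq | exact Hint | intros; apply vnorm_nonneg]).
  pose proof (vnorm_nonneg d v). change (vdist d (y q) (y p)) with (vnorm d v). nra.
Qed.

Lemma RInt_le_exp_weighted (g : R -> R) lo p q T w :
  (forall z, continuous g z) -> (forall s, lo <= s <= T -> 0 <= g s) ->
  lo <= p -> p <= q -> q <= T -> T - p <= w ->
  RInt g p q <= exp w * RInt (fun s => exp (- (T - s)) * g s) lo T.
Proof.
  intros Hg Hpos Hlo Hpq HqT Hw.
  set (h := fun s => exp (- (T - s)) * g s).
  assert (Hh : forall z, continuous h z).
  { intros z. apply continuous_Rmult; [|apply Hg].
    apply (ex_derive_continuous (fun s => exp (- (T - s)))). auto_derive. exact I. }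
  assert (Hh_pos : forall s, lo <= s <= T -> 0 <= h s)
    by (intros s Hs; apply Rmult_le_pos; [apply Rlt_le, exp_pos | apply Hpos, Hs]).
  assert (Hweight : RInt g p q <= exp w * RInt h p q).
  { rewrite <- RInt_scal_R by now apply ex_RInt_continuous_R.
    apply RInt_le; [exact Hpq | now apply ex_RInt_continuous_R | |].
    - apply ex_RInt_continuous_R. intros z.
      apply continuous_Rmult; [apply continuous_const | apply Hh].
    - intros s Hs. unfold h, scal; simpl; unfold mult; simpl.
      rewrite <- Rmult_assoc, <- exp_plus.
      assert (1 <= exp (w + - (T - s))) by (pose proof (exp_ineq1_le (w + - (T - s))); lra).
      assert (0 <= g s) by (apply Hpos; lra). nra. }
  assert (Hsub : RInt h p q <= RInt h lo T).
  { rewrite <- (RInt_Chasles_R h lo p T), <- (RInt_Chasles_R h p q T)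
      by now apply ex_RInt_continuous_R.
    assert (0 <= RInt h lo p)
      by (apply RInt_ge_0; [lra | now apply ex_RInt_continuous_R | intros; apply Hh_pos; lra]).
    assert (0 <= RInt h q T)
      by (apply RInt_ge_0; [lra | now apply ex_RInt_continuous_R | intros; apply Hh_pos; lra]).
    lra. }
  pose proof (exp_pos w). nra.
Qed.

Lemma vnorm_rhs_le N d psi sigma tau x i r : (2 <= N)%nat -> (i < N)%nat ->
  (forall s, 0 <= s -> 0 <= psi s <= 1) ->
  vnorm d (rhs N d psi sigma tau x i r) <=
  diam N d x (r - tau) + vdist d (x i (r - tau)) (x i (r - sigma)).
Proof.
  intros HN Hi Hpsi.
  set (B := diam N d x (r - tau) + vdist d (x i (r - tau)) (x i (r - sigma))).
  set (L := filter (fun j => negb (Nat.eqb j i)) (idx N)).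
  assert (HN1 : 0 < INR (N - 1)) by (apply lt_0_INR; lia).
  assert (HB : 0 <= B)
    by (apply Rplus_le_le_0_compat; [apply lmax_nonneg | apply vnorm_nonneg]).
  unfold rhs. fold L.
  eapply Rle_trans; [apply vnorm_lsum_le|].
  eapply Rle_trans; [apply (lsum_le L _ (fun _ => / INR (N - 1) * B))|].
  - intros j Hj. apply filter_In in Hj as [Hj _]. apply In_idx in Hj.
    set (p := psi (vdist d (x i (r - sigma)) (x j (r - tau)))).
    assert (Hp : 0 <= p <= 1) by apply Hpsi, vnorm_nonneg.
    rewrite (vnorm_scal d _ (fun k => x j (r - tau) k - x i (r - sigma) k)).
    fold (vdist d (x j (r - tau)) (x i (r - sigma))).
    rewrite Rabs_right by (apply Rle_ge, Rmult_le_pos; [apply Rlt_le, Rinv_0_lt_compat|]; lra).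
    assert (Hdist : vdist d (x j (r - tau)) (x i (r - sigma)) <= B).
    { eapply Rle_trans; [apply (vdist_triangle d _ (x i (r - tau)))|].
      apply Rplus_le_compat_r. now apply vdist_le_diam. }
    assert (0 <= vdist d (x j (r - tau)) (x i (r - sigma))) by apply vnorm_nonneg.
    pose proof (Rinv_0_lt_compat _ HN1).
    rewrite Rmult_assoc. apply Rmult_le_compat_l; nra.
  - rewrite lsum_const.
    apply (length_filter_neq_le N i), le_INR in Hi.
    replace B with (INR (N - 1) * (/ INR (N - 1) * B)) at 2 by (field; lra).
    apply Rmult_le_compat_r; [|exact Hi].
    apply Rmult_le_pos; [apply Rlt_le, Rinv_0_lt_compat|]; lra.
Qed.

(* Holding the solution constant before time -tau turns its one-sided continuity at -tau
   into continuity on all of R; [speed] below, built from it, is then continuous everywhere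
   and agrees with [maxvel] at positive times. *)
Definition hold_before (c : R) (x : nat -> R -> vec) : nat -> R -> vec :=
  fun i s k => x i (Rmax s c) k.

Lemma hold_before_eq c x i s : c <= s -> hold_before c x i s = x i s.
Proof. intros H. unfold hold_before. rewrite Rmax_left by exact H. reflexivity. Qed.

Section DelayedConsensus.

Variables (N d : nat) (psi : R -> R) (sigma tau : R) (x : nat -> R -> vec).
Hypothesis HN : (2 <= N)%nat.
Hypothesis Hsigma : 0 <= sigma <= tau.
Hypothesis Hpsi_cont : forall r, 0 <= r ->
  filterlim psi (within (fun s => 0 <= s) (locally r)) (locally (psi r)).
Hypothesis Hpsi_range : forall r, 0 <= r -> 0 <= psi r <= 1.
Hypothesis Hsol : is_solution N d psi sigma tau x.

Local Notation X := (hold_before (- tau) x).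

Definition speed (r : R) : R :=
  lmax (idx N) (fun i => vnorm d (rhs N d psi sigma tau X i r)).

Lemma continuous_hold_before i k c t : (i < N)%nat -> (k < d)%nat ->
  continuous (fun r => X i (r - c) k) t.
Proof.
  intros Hi Hk. destruct Hsol as [Hcont _]. unfold hold_before.
  apply (continuous_comp_within (fun s => - tau <= s) (fun r => Rmax (r - c) (- tau))
    (fun s => x i s k)).
  - intros r. apply Rmax_r.
  - apply continuous_Rmax; [|apply continuous_const].
    apply continuous_Rminus; [apply continuous_id | apply continuous_const].
  - apply Hcont; [exact Hi | exact Hk | apply Rmax_r].
Qed.

Lemma continuous_rhs_hold_before i k t : (i < N)%nat -> (k < d)%nat ->
  continuous (fun r => rhs N d psi sigma tau X i r k) t.
Proof.
  intros Hi Hk. unfold rhs. apply continuous_lsum. intros j Hj.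
  apply filter_In in Hj as [Hj _]. apply In_idx in Hj.
  apply continuous_Rmult; [apply continuous_Rmult; [apply continuous_const|] |].
  - apply (continuous_comp_within (fun s => 0 <= s)
      (fun r => vdist d (X i (r - sigma)) (X j (r - tau))) psi).
    + intros r. apply vnorm_nonneg.
    + apply continuous_vnorm. intros k' Hk'.
      apply continuous_Rminus; apply continuous_hold_before; assumption.
    + apply Hpsi_cont, vnorm_nonneg.
  - apply continuous_Rminus; apply continuous_hold_before; assumption.
Qed.

Lemma ex_RInt_vnorm_rhs_hold_before i a b : (i < N)%nat ->
  ex_RInt (fun r => vnorm d (rhs N d psi sigma tau X i r)) a b.
Proof.
  intros Hi. apply ex_RInt_continuous_R. intros r.
  apply continuous_vnorm. intros k Hk. now apply continuous_rhs_hold_before.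
Qed.

Lemma continuous_speed t : continuous speed t.
Proof.
  apply continuous_lmax. intros i Hi. apply In_idx in Hi.
  apply continuous_vnorm. intros k Hk. now apply continuous_rhs_hold_before.
Qed.

Lemma continuous_diam_hold_before c t : continuous (fun s => diam N d X (s - c)) t.
Proof.
  apply continuous_lmax. intros i Hi. apply In_idx in Hi.
  apply continuous_lmax. intros j Hj. apply In_idx in Hj.
  apply continuous_vnorm. intros k Hk.
  apply continuous_Rminus; now apply continuous_hold_before.
Qed.

Lemma continuous_speed_tail T t : continuous (fun s => RInt speed s T) t.
Proof.
  apply (continuous_RInt_2 speed t T). apply filter_forall. intros s.
  apply (RInt_correct (V := R_CompleteNormedModule)).
  apply ex_RInt_continuous_R, continuous_speed.
Qed.

Lemma speed_tail_nonneg s T : s <= T -> 0 <= RInt speed s T.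
Proof.
  intros HsT. apply RInt_ge_0; [exact HsT | apply ex_RInt_continuous_R, continuous_speed |].
  intros. apply lmax_nonneg.
Qed.

Lemma rhs_hold_before i r k : 0 <= r ->
  rhs N d psi sigma tau x i r k = rhs N d psi sigma tau X i r k.
Proof.
  intros Hr. unfold rhs. apply lsum_ext. intros j _.
  rewrite !hold_before_eq by lra. reflexivity.
Qed.

Lemma diam_hold_before s : - tau <= s -> diam N d X s = diam N d x s.
Proof.
  intros Hs. unfold diam. apply lmax_ext. intros i _. apply lmax_ext. intros j _.
  rewrite !hold_before_eq by exact Hs. reflexivity.
Qed.

Lemma maxvel_eq_speed r : 0 < r -> maxvel N d x r = speed r.
Proof.
  intros Hr. destruct Hsol as [_ Hder]. unfold maxvel, speed.
  apply lmax_ext. intros i Hi. apply In_idx in Hi.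
  apply vnorm_ext. intros k Hk. unfold xdot.
  rewrite <- rhs_hold_before by lra. now apply is_derive_unique, Hder.
Qed.

Lemma displacement_le i p q : (i < N)%nat -> p <= q -> 0 < p \/ p = q ->
  vdist d (x i q) (x i p) <= RInt (fun r => vnorm d (rhs N d psi sigma tau X i r)) p q.
Proof.
  intros Hi Hpq [Hp | <-].
  - destruct Hsol as [_ Hder].
    apply vdist_le_RInt_vnorm_derive; [exact Hpq | |]; intros r k Hr Hk.
    + rewrite <- rhs_hold_before by lra. apply Hder; [exact Hi | exact Hk | lra].
    + now apply continuous_rhs_hold_before.
  - rewrite vdist_refl, RInt_point. apply Rle_refl.
Qed.

Lemma velocity_le i r T : (i < N)%nat -> tau < r <= T ->
  vnorm d (rhs N d psi sigma tau X i r) <= diam N d x (r - tau) + RInt speed (r - tau) T.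
Proof.
  intros Hi Hr.
  eapply Rle_trans; [apply vnorm_rhs_le; assumption|].
  rewrite diam_hold_before, !hold_before_eq by lra.
  apply Rplus_le_compat_l. rewrite vdist_sym.
  eapply Rle_trans; [apply displacement_le; [exact Hi | lra | left; lra]|].
  assert (Hint : forall a b, ex_RInt speed a b)
    by (intros; apply ex_RInt_continuous_R, continuous_speed).
  eapply Rle_trans.
  - apply RInt_le; [lra | now apply ex_RInt_vnorm_rhs_hold_before | apply Hint |].
    intros s _. unfold speed.
    apply (lmax_ge (idx N) (fun i => vnorm d (rhs N d psi sigma tau X i s))), In_idx, Hi.
  - rewrite <- (RInt_Chasles_R speed (r - tau) (r - sigma) T) by apply Hint.
    pose proof (speed_tail_nonneg (r - sigma) T). lra.
Qed.

Lemma delayed_displacement_le i t : (i < N)%nat -> 2 * tau <= t ->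
  vdist d (x i (t - tau)) (x i (t - sigma)) <=
    RInt (fun r => diam N d x (r - tau)) (t - tau) (t - sigma)
    + RInt (fun r => RInt speed (r - tau) (t - sigma)) (t - tau) (t - sigma).
Proof.
  intros Hi Ht. rewrite vdist_sym.
  assert (Hdiam : ex_RInt (fun r => diam N d x (r - tau)) (t - tau) (t - sigma)).
  { apply (ex_RInt_ext (fun r => diam N d X (r - tau))).
    - intros r Hr. rewrite Rmin_left, Rmax_right in Hr by lra. apply diam_hold_before. lra.
    - apply ex_RInt_continuous_R, continuous_diam_hold_before. }
  assert (Htail : ex_RInt (fun r => RInt speed (r - tau) (t - sigma)) (t - tau) (t - sigma)).
  { apply ex_RInt_continuous_R. intros r.
    apply (continuous_comp (fun r => r - tau) (fun s => RInt speed s (t - sigma))).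
    - apply continuous_Rminus; [apply continuous_id | apply continuous_const].
    - apply continuous_speed_tail. }
  eapply Rle_trans; [apply displacement_le; [exact Hi | lra |]|].
  { destruct (Req_dec tau 0); [right | left]; lra. }
  rewrite <- (RInt_plus_R _ _ _ _ Hdiam Htail).
  apply RInt_le; [lra | now apply ex_RInt_vnorm_rhs_hold_before
                       | now apply (ex_RInt_plus (V := R_CompleteNormedModule)) |].
  intros r Hr. apply velocity_le; [exact Hi | lra].
Qed.

Lemma RInt_speed_tail_shift_le t : 2 * tau <= t ->
  RInt (fun r => RInt speed (r - tau) (t - sigma)) (t - tau) (t - sigma) <=
  exp (2 * tau) * RInt (fun s => exp (- (t - sigma - s)) * RInt speed s (t - sigma))
                       (Rmax 0 (t - sigma - 2 * tau)) (t - sigma).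
Proof.
  intros Ht.
  assert (Hshift : RInt (fun r => RInt speed (r - tau) (t - sigma)) (t - tau) (t - sigma) =
                   RInt (fun s => RInt speed s (t - sigma)) (t - 2 * tau) (t - sigma - tau)).
  { replace (t - 2 * tau) with (1 * (t - tau) + - tau) by ring.
    replace (t - sigma - tau) with (1 * (t - sigma) + - tau) by ring.
    rewrite <- (RInt_comp_lin (V := R_CompleteNormedModule)).
    - apply RInt_ext. intros r _. unfold scal; simpl; unfold mult; simpl.
      rewrite Rmult_1_l, Rmult_1_l. reflexivity.
    - apply ex_RInt_continuous_R, continuous_speed_tail. }
  rewrite Hshift. apply RInt_le_exp_weighted; try lra.
  - apply continuous_speed_tail.
  - intros s Hs. apply speed_tail_nonneg. lra.
  - apply Rmax_lub; lra.
Qed.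

Lemma Ffun_eq_speed beta T : 0 <= T ->
  Ffun N d x beta tau T =
  diam N d x T
  + beta * RInt (fun s => exp (- (T - s)) * RInt speed s T) (Rmax 0 (T - 2 * tau)) T.
Proof.
  intros HT. unfold Ffun. do 2 f_equal.
  set (lo := Rmax 0 (T - 2 * tau)).
  assert (Hlo : 0 <= lo <= T) by (split; [apply Rmax_l | apply Rmax_lub; lra]).
  apply RInt_ext. intros s Hs. rewrite (Rmin_left lo), (Rmax_right lo) in Hs by lra.
  f_equal. apply RInt_ext. intros r Hr. rewrite Rmin_left, Rmax_right in Hr by lra.
  apply maxvel_eq_speed. lra.
Qed.

End DelayedConsensus.

Theorem lemma3p5
  (N d : nat) (sigma tau beta : R) (psi : R -> R) (x : nat -> R -> vec)
  (HN : (2 <= N)%nat) (Hd : (1 <= d)%nat)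
  (Hsig : 0 <= sigma) (Hst : sigma <= tau)
  (Hpsi_cont : forall r, 0 <= r ->
     filterlim psi (within (fun s => 0 <= s) (locally r)) (locally (psi r)))
  (Hpsi_mono : forall r1 r2, 0 <= r1 -> r1 <= r2 -> psi r2 <= psi r1)
  (Hpsi_pos : forall r, 0 <= r -> 0 < psi r)
  (Hpsi_le1 : forall r, 0 <= r -> psi r <= 1)
  (Hsol : is_solution N d psi sigma tau x)
  (Hbeta : 0 < beta) :
  forall i j t, (i < N)%nat -> (j < N)%nat -> 2 * tau <= t ->
    vdist d (x j (t - tau)) (x i (t - sigma)) <=
      diam N d x (t - tau)
      + RInt (fun s => diam N d x (s - tau)) (t - tau) (t - sigma)
      + / beta * exp (2 * tau) * Ffun N d x beta tau (t - sigma).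
Proof.
  intros i j t Hi Hj Ht.
  assert (Hsigma : 0 <= sigma <= tau) by lra.
  assert (Hpsi : forall r, 0 <= r -> 0 <= psi r <= 1)
    by (intros r Hr; split; [apply Rlt_le, Hpsi_pos | apply Hpsi_le1]; exact Hr).
  pose proof (vdist_triangle d (x j (t - tau)) (x i (t - tau)) (x i (t - sigma))) as Hjump.
  pose proof (vdist_le_diam N d x (t - tau) j i Hj Hi) as Hspread.
  pose proof (delayed_displacement_le N d psi sigma tau x HN Hsigma Hpsi_cont Hpsi Hsol i t Hi Ht)
    as Hdisp.
  pose proof (RInt_speed_tail_shift_le N d psi sigma tau x Hsigma Hpsi_cont Hsol t Ht) as Hshift.
  rewrite (Ffun_eq_speed N d psi sigma tau x Hsigma Hsol beta) by lra.
  set (I := RInt _ (Rmax 0 (t - sigma - 2 * tau)) (t - sigma)) in *.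
  assert (0 <= diam N d x (t - sigma)) by apply lmax_nonneg.
  assert (Hexp : 0 < / beta * exp (2 * tau))
    by (apply Rmult_lt_0_compat; [apply Rinv_0_lt_compat, Hbeta | apply exp_pos]).
  replace (/ beta * exp (2 * tau) * (diam N d x (t - sigma) + beta * I))
    with (/ beta * exp (2 * tau) * diam N d x (t - sigma) + exp (2 * tau) * I) by (field; lra).
  nra.
Qed.
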